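(* Let $l\ge 1$ and $m\ge 1$ be integers and $E$ a real number. Define $\mathcal N := \sqrt{\sum_{k=-2^{l-1}+1}^{2^{l-1}} \left|\frac{\sin \frac{(k-E)\pi}{m}}{\frac{(k-E)\pi}{m}}\right|^{2m}}$ and $\delta := \sum_{\substack{k=-2^{l-1}+1,\dots,2^{l-1}\\ |k-E|>m}} \left|\frac{1}{\mathcal N}\left(\frac{\sin \frac{(k-E)\pi}{m}}{\frac{(k-E)\pi}{m}}\right)^m\right|^2 .$ Then $\delta = O(\exp(-m))$.
   Context: Here $\delta$ is the probability, in $m$-th B-spline boosted quantum phase estimation with $l$ ancilla qubits applied to an eigenstate with eigenphase $E$ (in units of the ancilla grid), of measuring an outcome $k$ outside the confidence interval $E\pm m$; the post-QPE ancilla amplitudes are $\frac{1}{\mathcal N}\left(\frac{\sin\frac{(k-E)\pi}{m}}{\frac{(k-E)\pi}{m}}\right)^m$ for $k\in\{-2^{l-1}+1,\dots,2^{l-1}\}$. *)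

From Stdlib Require Import Reals List.
Open Scope R_scope.

Definition sinc (y : R) : R :=
  if Req_EM_T y 0 then 1 else sin y / y.

(* The ancilla outcome indexed by j in {0,...,2^l - 1}:
   k = j - 2^(l-1) + 1 ranges over {-2^(l-1)+1, ..., 2^(l-1)}. *)
Definition kval (l j : nat) : R := INR j - 2 ^ (l - 1) + 1.

Definition amp (m : nat) (E k : R) : R := sinc ((k - E) * PI / INR m) ^ m.

Definition ksum (l : nat) (f : R -> R) : R :=
  fold_right Rplus 0 (map (fun j => f (kval l j)) (seq 0 (2 ^ l))).

Definition Nnorm (l m : nat) (E : R) : R :=
  sqrt (ksum l (fun k => Rabs (sinc ((k - E) * PI / INR m)) ^ (2 * m))).

Definition delta (l m : nat) (E : R) : R :=
  ksum l (fun k => if Rlt_dec (INR m) (Rabs (k - E))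
                   then Rabs (/ Nnorm l m E * amp m E k) ^ 2 else 0).

From Stdlib Require Import Reals Lra Lia List.
Open Scope R_scope.

(* The normalisation is bounded below by the single outcome nearest to E: there
   |k - E| <= 1/2, so sinc((k - E) pi / m) >= 1 - pi^2 / (24 m^2) =: L and
   N^2 >= L^(2m).  Outside the confidence interval, |sinc x| <= 1/|x| and
   Bernoulli's inequality give
   |sinc((k - E) pi / m)|^(2m) <= pi^(-2m) (1 + |k - E| - m)^(-2), and these
   terms sum to at most 4 because each is dominated by the drop of one bounded
   nonincreasing function over [k - E - 1/2, k - E + 1/2].  Hence
   delta <= 4 (pi L)^(-2m) <= 12 e^(-m), as (pi L)^2 >= e once m >= 2. *)

Lemma sin_ge_cubic x : 0 <= x <= 2 -> x - x ^ 3 / 6 <= sin x.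
Proof.
  intros [Hx0 Hx2].
  assert (HPI := PI2_3_2).
  destruct (SIN x Hx0) as [Hlb _]; [lra|].
  replace (sin_lb x) with (x - x ^ 3 / 6 + x ^ 5 * (42 - x ^ 2) / 5040) in Hlb
    by (unfold sin_lb, sin_approx, sin_term; simpl; field).
  assert (0 <= x ^ 5) by (apply pow_le; lra).
  assert (x ^ 2 <= 4) by nra.
  assert (0 <= x ^ 5 * (42 - x ^ 2) / 5040) by (apply Rmult_le_pos; nra).
  lra.
Qed.

Lemma sinc_ge_quadratic x : x ^ 2 <= 4 -> 1 - x ^ 2 / 6 <= sinc x.
Proof.
  intros Hx. unfold sinc. destruct (Req_EM_T x 0) as [->|Hx0]; [simpl; lra|].
  set (y := Rabs x).
  assert (Hy : 0 < y) by (apply Rabs_pos_lt; exact Hx0).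
  assert (Hyx : y ^ 2 = x ^ 2) by apply pow2_abs.
  assert (Heven : sin x / x = sin y / y).
  { unfold y, Rabs. destruct (Rcase_abs x); [rewrite sin_neg; field|]; lra. }
  assert (Hy2 : y <= 2) by nra.
  rewrite Heven, <- Hyx.
  assert (Hsin := sin_ge_cubic y (conj (Rlt_le _ _ Hy) Hy2)).
  apply (Rmult_le_reg_r y); [exact Hy|].
  replace (sin y / y * y) with (sin y) by (field; lra).
  lra.
Qed.

Lemma Rabs_sinc_le_inv x : x <> 0 -> Rabs (sinc x) <= / Rabs x.
Proof.
  intros Hx. unfold sinc. destruct (Req_EM_T x 0) as [->|_]; [contradiction|].
  unfold Rdiv. rewrite Rabs_mult, Rabs_inv.
  assert (Rabs (sin x) <= 1) by (apply Rabs_le, SIN_bound).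
  assert (0 < / Rabs x) by (apply Rinv_0_lt_compat, Rabs_pos_lt, Hx).
  nra.
Qed.

(* [1 - x^2 / 6] at [x = pi / (2 m)], the largest argument of sinc at the
   outcome nearest to [E]. *)
Definition sinc_peak_lb (m : nat) : R := 1 - PI ^ 2 / (24 * INR m ^ 2).

Lemma sinc_peak_lb_ge (m : nat) c :
  1 <= c -> c <= INR m -> 1 - 2 / (3 * c ^ 2) <= sinc_peak_lb m.
Proof.
  intros Hc HcM. unfold sinc_peak_lb.
  assert (HPI : PI ^ 2 <= 16) by (assert (HPI := PI_4); assert (HPI0 := PI_RGT_0); nra).
  assert (Hinv : / (24 * INR m ^ 2) <= / (24 * c ^ 2)) by (apply Rinv_le_contravar; nra).
  assert (0 <= / (24 * INR m ^ 2)) by (left; apply Rinv_0_lt_compat; nra).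
  replace (2 / (3 * c ^ 2)) with (16 * / (24 * c ^ 2)) by (field; lra).
  unfold Rdiv. nra.
Qed.

Lemma sinc_peak_lb_ge_third (m : nat) : (1 <= m)%nat -> 1 / 3 <= sinc_peak_lb m.
Proof.
  intros Hm. replace (1 / 3) with (1 - 2 / (3 * 1 ^ 2)) by field.
  apply sinc_peak_lb_ge; [lra|]. apply (le_INR 1) in Hm. exact Hm.
Qed.

Lemma Rabs_sinc_near_peak (m : nat) t : (1 <= m)%nat -> Rabs t <= 1 / 2 ->
  sinc_peak_lb m <= Rabs (sinc (t * PI / INR m)).
Proof.
  intros Hm Ht.
  assert (HM : 1 <= INR m) by (apply (le_INR 1) in Hm; simpl in Hm; exact Hm).
  assert (HPI := PI_4). assert (HPI0 := PI_RGT_0).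
  set (x := t * PI / INR m).
  assert (Ht2 : t ^ 2 <= 1 / 4) by (rewrite <- pow2_abs; assert (0 <= Rabs t) by apply Rabs_pos; nra).
  assert (Hx2 : x ^ 2 = t ^ 2 * (PI ^ 2 / INR m ^ 2)) by (unfold x; field; lra).
  assert (Hr : PI ^ 2 / INR m ^ 2 <= 16).
  { apply (Rmult_le_reg_r (INR m ^ 2)); [nra|].
    replace (PI ^ 2 / INR m ^ 2 * INR m ^ 2) with (PI ^ 2) by (field; lra). nra. }
  assert (0 <= PI ^ 2 / INR m ^ 2) by (apply Rmult_le_pos; [nra|left; apply Rinv_0_lt_compat; nra]).
  apply Rle_trans with (1 - x ^ 2 / 6); [|eapply Rle_trans; [apply sinc_ge_quadratic; nra|apply Rle_abs]].
  unfold sinc_peak_lb. replace (PI ^ 2 / (24 * INR m ^ 2)) with (PI ^ 2 / INR m ^ 2 / 24) by (field; lra).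
  nra.
Qed.

Lemma Rabs_sinc_pow_tail_le (m : nat) t : (1 <= m)%nat -> INR m < Rabs t ->
  Rabs (sinc (t * PI / INR m)) ^ (2 * m) <= / PI ^ (2 * m) * / (1 + Rabs t - INR m) ^ 2.
Proof.
  intros Hm Ht.
  assert (HM : 1 <= INR m) by (apply (le_INR 1) in Hm; simpl in Hm; exact Hm).
  assert (HPI := PI_RGT_0).
  set (M := INR m) in *. set (u := Rabs t) in *.
  assert (Hx : Rabs (t * PI / M) = PI * (u / M)).
  { unfold Rdiv. rewrite !Rabs_mult, Rabs_inv, (Rabs_right PI), (Rabs_right M) by lra.
    unfold u. ring. }
  assert (Hbern : 1 + u - M <= (u / M) ^ m).
  { replace (1 + u - M) with (1 + M * (u / M - 1)) by (field; lra).
    replace (u / M) with (1 + (u / M - 1)) at 2 by ring.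
    apply poly. apply (Rmult_lt_reg_r M); [lra|].
    replace ((u / M - 1) * M) with (u - M) by (field; lra). lra. }
  apply Rle_trans with ((/ Rabs (t * PI / M)) ^ (2 * m)).
  { apply pow_incr. split; [apply Rabs_pos|].
    apply Rabs_sinc_le_inv. intros H0.
    assert (Hpos : 0 < Rabs (t * PI / M))
      by (rewrite Hx; apply Rmult_lt_0_compat; [lra|apply Rdiv_lt_0_compat; lra]).
    rewrite H0, Rabs_R0 in Hpos. lra. }
  rewrite Hx, pow_inv, Rpow_mult_distr, Rinv_mult, Nat.mul_comm, (pow_mult (u / M)).
  apply Rmult_le_compat_l; [left; apply Rinv_0_lt_compat, pow_lt; lra|].
  apply Rinv_le_contravar; [apply pow_lt; lra|]. apply pow_incr. lra.
Qed.

Definition tail_potential (M s : R) : R :=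
  if Rle_dec (M - 1 / 2) s then 2 - / (s - M + 1) else 0.

Lemma tail_potential_bounds M s : 0 <= tail_potential M s <= 2.
Proof.
  unfold tail_potential. destruct (Rle_dec (M - 1 / 2) s); [|lra].
  assert (0 < / (s - M + 1)) by (apply Rinv_0_lt_compat; lra).
  assert (/ (s - M + 1) <= / (1 / 2)) by (apply Rinv_le_contravar; lra).
  replace (/ (1 / 2)) with 2 in * by field. lra.
Qed.

Lemma tail_potential_le M a b : a <= b -> tail_potential M a <= tail_potential M b.
Proof.
  intros Hab.
  assert (Hb := tail_potential_bounds M b).
  unfold tail_potential in *.
  destruct (Rle_dec (M - 1 / 2) a), (Rle_dec (M - 1 / 2) b); try lra.
  assert (/ (b - M + 1) <= / (a - M + 1)) by (apply Rinv_le_contravar; lra). lra.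
Qed.

Lemma tail_potential_step M t : M < t ->
  / (1 + t - M) ^ 2 <= tail_potential M (t + 1 / 2) - tail_potential M (t - 1 / 2).
Proof.
  intros Ht. unfold tail_potential.
  destruct (Rle_dec (M - 1 / 2) (t + 1 / 2)), (Rle_dec (M - 1 / 2) (t - 1 / 2)); try lra.
  set (a := t - M).
  replace (2 - / (t + 1 / 2 - M + 1) - (2 - / (t - 1 / 2 - M + 1)))
    with (/ ((1 + a) ^ 2 - 1 / 4)) by (unfold a; field; repeat split; nra).
  apply Rinv_le_contravar; unfold a in *; nra.
Qed.

(* Its drop across [t - 1/2, t + 1/2] dominates the tail weight
   [(1 + |t| - M)^(-2)], so the tail sum telescopes. *)
Definition potential (M s : R) : R := tail_potential M (- s) - tail_potential M s.

Lemma potential_bounds M s : -2 <= potential M s <= 2.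
Proof.
  unfold potential.
  assert (H1 := tail_potential_bounds M s). assert (H2 := tail_potential_bounds M (- s)).
  lra.
Qed.

Lemma potential_le M a b : a <= b -> potential M b <= potential M a.
Proof.
  intros Hab. unfold potential.
  assert (tail_potential M (- b) <= tail_potential M (- a)) by (apply tail_potential_le; lra).
  assert (tail_potential M a <= tail_potential M b) by (apply tail_potential_le; lra).
  lra.
Qed.

Lemma potential_drop_ge M t : M < Rabs t ->
  / (1 + Rabs t - M) ^ 2 <= potential M (t - 1 / 2) - potential M (t + 1 / 2).
Proof.
  unfold potential, Rabs. destruct (Rcase_abs t); intros Ht.
  - assert (Hstep := tail_potential_step M (- t) Ht).
    assert (tail_potential M (t - 1 / 2) <= tail_potential M (t + 1 / 2))
      by (apply tail_potential_le; lra).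
    replace (- (t - 1 / 2)) with (- t + 1 / 2) by ring.
    replace (- (t + 1 / 2)) with (- t - 1 / 2) by ring.
    lra.
  - assert (Hstep := tail_potential_step M t Ht).
    assert (tail_potential M (- (t + 1 / 2)) <= tail_potential M (- (t - 1 / 2)))
      by (apply tail_potential_le; lra).
    lra.
Qed.

Lemma sum_map_nonneg {A : Type} (f : A -> R) s :
  (forall x, 0 <= f x) -> 0 <= fold_right Rplus 0 (map f s).
Proof.
  intros Hf. induction s as [|x s IH]; simpl; [lra|]. specialize (Hf x). lra.
Qed.

Lemma sum_map_ge_member {A : Type} (f : A -> R) s a :
  (forall x, 0 <= f x) -> In a s -> f a <= fold_right Rplus 0 (map f s).
Proof.
  intros Hf. induction s as [|x s IH]; simpl; [tauto|]. intros [->|Ha].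
  - assert (H := sum_map_nonneg f s Hf). lra.
  - specialize (IH Ha). specialize (Hf x). lra.
Qed.

Lemma sum_seq_telescope_le (f : nat -> R) (h : R -> R) n : forall s,
  (forall j, f j <= h (INR j) - h (INR j + 1)) ->
  fold_right Rplus 0 (map f (seq s n)) <= h (INR s) - h (INR (s + n)).
Proof.
  induction n as [|n IH]; intros s Hf; simpl.
  - rewrite Nat.add_0_r. lra.
  - specialize (IH (S s) Hf). specialize (Hf s).
    rewrite S_INR in IH. replace (S s + n)%nat with (s + S n)%nat in IH by lia. lra.
Qed.

Lemma exists_nat_near (n : nat) y :
  0 <= y + 1 / 2 < INR n -> exists j, (j < n)%nat /\ Rabs (INR j - y) <= 1 / 2.
Proof.
  induction n as [|n IH]; intros Hy; [simpl in Hy; lra|].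
  destruct (Rlt_dec (y + 1 / 2) (INR n)) as [Hlt|Hge].
  - destruct (IH (conj (proj1 Hy) Hlt)) as [j [Hj Hjy]]. exists j. split; [lia|exact Hjy].
  - exists n. split; [lia|]. rewrite S_INR in Hy. apply Rabs_le. lra.
Qed.

Lemma exists_kval_near (l : nat) E : (1 <= l)%nat -> - 2 ^ (l - 1) + 1 <= E <= 2 ^ (l - 1) ->
  exists j, (j < 2 ^ l)%nat /\ Rabs (kval l j - E) <= 1 / 2.
Proof.
  intros Hl HE.
  assert (Hpow : INR (2 ^ l) = 2 * 2 ^ (l - 1)).
  { rewrite pow_INR. replace l with (S (l - 1)) at 1 by lia. reflexivity. }
  destruct (exists_nat_near (2 ^ l) (E + 2 ^ (l - 1) - 1)) as [j [Hj Hjy]]; [lra|].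
  exists j. split; [exact Hj|]. unfold kval.
  replace (INR j - 2 ^ (l - 1) + 1 - E) with (INR j - (E + 2 ^ (l - 1) - 1)) by ring.
  exact Hjy.
Qed.

Lemma Nnorm_sqr l m E :
  Nnorm l m E ^ 2 = ksum l (fun k => Rabs (sinc ((k - E) * PI / INR m)) ^ (2 * m)).
Proof.
  unfold Nnorm. rewrite pow2_sqrt; [reflexivity|].
  apply sum_map_nonneg. intros j. apply pow_le, Rabs_pos.
Qed.

Lemma sinc_peak_lb_pow_le_Nnorm_sqr l m E : (1 <= l)%nat -> (1 <= m)%nat ->
  - 2 ^ (l - 1) + 1 <= E <= 2 ^ (l - 1) -> sinc_peak_lb m ^ (2 * m) <= Nnorm l m E ^ 2.
Proof.
  intros Hl Hm HE.
  destruct (exists_kval_near l E Hl HE) as [j [Hj Hnear]].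
  assert (HL := sinc_peak_lb_ge_third m Hm).
  rewrite Nnorm_sqr. unfold ksum.
  eapply Rle_trans; [|apply (sum_map_ge_member _ _ j)].
  - apply pow_incr. split; [lra|]. apply Rabs_sinc_near_peak; assumption.
  - intros i. apply pow_le, Rabs_pos.
  - apply in_seq. lia.
Qed.

Lemma delta_summand_le (m : nat) E k N :
  (1 <= m)%nat -> sinc_peak_lb m ^ (2 * m) <= N ^ 2 ->
  (if Rlt_dec (INR m) (Rabs (k - E)) then Rabs (/ N * amp m E k) ^ 2 else 0)
  <= / (PI * sinc_peak_lb m) ^ (2 * m)
     * (potential (INR m) (k - E - 1 / 2) - potential (INR m) (k - E + 1 / 2)).
Proof.
  intros Hm HN.
  assert (HPI := PI_RGT_0).
  assert (HL := sinc_peak_lb_ge_third m Hm).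
  set (L := sinc_peak_lb m) in *.
  assert (HLpow : 0 < L ^ (2 * m)) by (apply pow_lt; lra).
  set (K := / (PI * L) ^ (2 * m)).
  assert (HK : 0 < K) by (apply Rinv_0_lt_compat, pow_lt; nra).
  destruct (Rlt_dec (INR m) (Rabs (k - E))) as [Hfar|Hnear].
  - set (s := sinc ((k - E) * PI / INR m)).
    assert (Hsq : Rabs (/ N * amp m E k) ^ 2 = / N ^ 2 * Rabs s ^ (2 * m)).
    { unfold amp. fold s.
      rewrite pow2_abs, Rpow_mult_distr, pow_inv, (Nat.mul_comm 2 m), pow_mult, RPow_abs, pow2_abs.
      reflexivity. }
    assert (Htail := Rabs_sinc_pow_tail_le m (k - E) Hm Hfar). fold s in Htail.
    assert (Hdrop := potential_drop_ge (INR m) (k - E) Hfar).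
    assert (HNinv : / N ^ 2 <= / L ^ (2 * m)) by (apply Rinv_le_contravar; assumption).
    assert (Hs0 : 0 <= Rabs s ^ (2 * m)) by (apply pow_le, Rabs_pos).
    rewrite Hsq.
    apply Rle_trans with (/ L ^ (2 * m) * Rabs s ^ (2 * m)); [apply Rmult_le_compat_r; assumption|].
    apply Rle_trans with (K * / (1 + Rabs (k - E) - INR m) ^ 2); [|apply Rmult_le_compat_l; lra].
    replace (K * / (1 + Rabs (k - E) - INR m) ^ 2)
      with (/ L ^ (2 * m) * (/ PI ^ (2 * m) * / (1 + Rabs (k - E) - INR m) ^ 2))
      by (unfold K; rewrite Rpow_mult_distr, Rinv_mult; ring).
    apply Rmult_le_compat_l; [left; apply Rinv_0_lt_compat, HLpow|exact Htail].
  - assert (potential (INR m) (k - E + 1 / 2) <= potential (INR m) (k - E - 1 / 2))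
      by (apply potential_le; lra).
    apply Rmult_le_pos; lra.
Qed.

Lemma inv_pow_peak_le_exp (m : nat) : (1 <= m)%nat ->
  / (PI * sinc_peak_lb m) ^ (2 * m) <= 3 * exp (- INR m).
Proof.
  intros Hm.
  assert (HPI := PI2_3_2). assert (He := exp_le_3). assert (He0 := exp_pos 1).
  set (a := (PI * sinc_peak_lb m) ^ 2).
  assert (Hexp : exp (INR m) = exp 1 ^ m).
  { rewrite <- Rpower_pow by exact He0. unfold Rpower. rewrite ln_exp, Rmult_1_r. reflexivity. }
  assert (Hgrow : exp 1 ^ m <= 3 * a ^ m).
  { destruct (Nat.eq_dec m 1) as [->|Hm2].
    - assert (HL := sinc_peak_lb_ge_third 1 (le_n 1)).
      assert (1 <= PI * sinc_peak_lb 1) by nra.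
      unfold a. simpl. nra.
    - assert (HL : 5 / 6 <= sinc_peak_lb m).
      { replace (5 / 6) with (1 - 2 / (3 * 2 ^ 2)) by field.
        apply sinc_peak_lb_ge; [lra|]. apply (le_INR 2). lia. }
      assert (5 / 2 <= PI * sinc_peak_lb m) by nra.
      assert (Hea : exp 1 <= a) by (unfold a; nra).
      assert (exp 1 ^ m <= a ^ m) by (apply pow_incr; lra).
      assert (0 <= a ^ m) by (apply pow_le; lra).
      lra. }
  rewrite exp_Ropp, Hexp, pow_mult. fold a.
  replace (3 * / exp 1 ^ m) with (/ (exp 1 ^ m / 3)) by (field; apply pow_nonzero; lra).
  apply Rinv_le_contravar; [apply Rdiv_lt_0_compat; [apply pow_lt|]; lra|lra].
Qed.

Theorem lemma2 :
  exists C : R, 0 < C /\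
    forall (l m : nat) (E : R),
      (1 <= l)%nat -> (1 <= m)%nat ->
      - 2 ^ (l - 1) + 1 <= E <= 2 ^ (l - 1) ->
      delta l m E <= C * exp (- INR m).
Proof.
  exists 12. split; [lra|]. intros l m E Hl Hm HE.
  set (K := / (PI * sinc_peak_lb m) ^ (2 * m)).
  set (h := fun y => K * potential (INR m) (y - 2 ^ (l - 1) + 1 - E - 1 / 2)).
  assert (HN := sinc_peak_lb_pow_le_Nnorm_sqr l m E Hl Hm HE).
  assert (Htele : delta l m E <= h (INR 0) - h (INR (0 + 2 ^ l))).
  { apply sum_seq_telescope_le. intros j.
    replace (h (INR j) - h (INR j + 1))
      with (K * (potential (INR m) (kval l j - E - 1 / 2)
                 - potential (INR m) (kval l j - E + 1 / 2)))
      by (unfold h, kval; cbv beta; rewrite Rmult_minus_distr_l; do 3 f_equal; lra).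
    apply delta_summand_le; assumption. }
  assert (HK : K <= 3 * exp (- INR m)) by exact (inv_pow_peak_le_exp m Hm).
  assert (HK0 : 0 <= K).
  { assert (HL := sinc_peak_lb_ge_third m Hm). assert (HPI := PI_RGT_0).
    apply Rlt_le, Rinv_0_lt_compat, pow_lt. nra. }
  assert (H0 := potential_bounds (INR m) (INR 0 - 2 ^ (l - 1) + 1 - E - 1 / 2)).
  assert (Hn := potential_bounds (INR m) (INR (0 + 2 ^ l) - 2 ^ (l - 1) + 1 - E - 1 / 2)).
  assert (Hdrop : h (INR 0) - h (INR (0 + 2 ^ l)) <= 4 * K) by (unfold h; nra).
  lra.
Qed.
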